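(* Let $\Lambda = K\Gamma/I$ be a finite dimensional path algebra modulo an admissible ideal $I$ over a field $K$, with Jacobson radical $J$, and let $\mathcal{A}$ be a full subcategory of $\Lambda\text{-mod}$. Let $r\ge 1$, let $e(1),\dots,e(r)$ be vertices of $\Gamma$, and let $p_1,\dots,p_r,q_1,\dots,q_r$ be $2r$ paths of positive length in $K\Gamma$, none of which is a subpath of any of the others, such that for each $i$ the paths $p_i$ and $q_i$ have a common starting vertex $e(i)'$, $p_i$ ends in $e(i)$, and $q_i$ ends in $e(i+1)$ (where $e(r+1):=e(1)$). For an integer $j\ge1$ let $s(j)\in\{1,\dots,r\}$ with $j\equiv s(j)\pmod r$. Suppose the following two conditions hold. (1) For each natural number $n$ there is a module $M_n\in\mathcal{A}$ generated by top elements $x_{n,1},\dots,x_{n,nr}$ which are $K$-linearly independent modulo $JM_n$, such that: $x_{n,j}=e(s(j))'x_{n,j}$ for all $j$; $q_{s(j)}x_{n,j}=p_{s(j+1)}x_{n,j+1}$ for $1\le j<nr$; the elements $p_{s(1)}x_{n,1}$ and $q_{s(j)}x_{n,j}$ ($1\le j< nr$) are $K$-linearly independent elements of $\operatorname{Soc}M_n$; and the only paths of $K\Gamma$ not annihilating $x_{n,j}$ are the right subpaths of $p_{s(j)}$ and $q_{s(j)}$ when $j<nr$, and the right subpaths of $p_{s(nr)}$ when $j=nr$. (2) Every module $A\in\mathcal{A}$ satisfies: (i) $e(1)(\operatorname{Soc}A)\subseteq p_1A$; (ii) $q_iA\cap\operatorname{Soc}A\subseteq p_{i+1}A$ for $1\le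 i<r$, and $q_rA\cap\operatorname{Soc}A\subseteq p_1A$; (iii) for every $i$ and every $x\in A$, if $p_ix\in\operatorname{Soc}A$ then $q_ix\in\operatorname{Soc}A$. Then the simple module $S=\Lambda e(1)/Je(1)$ has no left $\mathcal{A}$-approximation.
   Context: Vertices of $\Gamma$ are identified with the corresponding primitive idempotents of $\Lambda$; paths act on modules through their images in $\Lambda$. Paths are composed right to left: $pq$ means first $q$ then $p$. A path $q$ is a subpath of $p$ if $p=p_2qp_1$ for paths $p_1,p_2$, and a right subpath if $p=p_2q$. A top element of a module $M$ is an element $x\in M\setminus JM$ with $ex=x$ for some vertex $e$. A left $\mathcal{A}$-approximation of a module $M$ is a homomorphism $f:M\to A$ with $A\in\mathcal{A}$ such that every homomorphism $M\to B$ with $B\in\mathcal{A}$ factors through $f$. *)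

From HB Require Import structures.
From mathcomp Require Import all_boot all_order all_algebra.
Set Implicit Arguments. Unset Strict Implicit. Unset Printing Implicit Defensive.
Import GRing.Theory.
Local Open Scope ring_scope.

(* A path is a pair (start vertex, list of arrows in traversal order);
   it is a genuine path of Gamma when [valid] holds.  The trivial path at v is
   (v, [::]).  Paths compose right to left: pcomp p q = pq = first q then p. *)
Section Quiver.
Variables (V A : finType) (src tgt : A -> V).

Definition qpath := (V * seq A)%type.

Fixpoint valid_from (v : V) (s : seq A) : bool :=
  if s is a :: s' then (src a == v) && valid_from (tgt a) s' else true.
Definition valid (p : qpath) : bool := valid_from p.1 p.2.
Definition psrc (p : qpath) : V := p.1.
Definition ptgt (p : qpath) : V := last p.1 [seq tgt a | a <- p.2].
Definition plen (p : qpath) : nat := size p.2.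
Definition pcomp (p q : qpath) : qpath := (q.1, q.2 ++ p.2).

Definition subpath (q p : qpath) : Prop :=
  exists p1 p2 : qpath, [/\ valid p1, valid p2, ptgt p1 = psrc q,
    ptgt q = psrc p2 & p = pcomp p2 (pcomp q p1)].
Definition right_subpath (q p : qpath) : Prop :=
  exists p2 : qpath, [/\ valid p2, ptgt q = psrc p2 & p = pcomp p2 q].

(* The path algebra K Gamma: finitely supported K-valued functions on
   (valid) paths, with the convolution product. *)
Variable K : fieldType.

Definition pathalg_elt (f : qpath -> K) : Prop :=
  (forall p, f p != 0 -> valid p) /\ exists s : seq qpath, forall p, f p != 0 -> p \in s.
Definition pdelta (q : qpath) : qpath -> K := fun p => (p == q)%:R.
Definition psplit1 (p : qpath) (k : nat) : qpath := (p.1, take k p.2).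
Definition psplit2 (p : qpath) (k : nat) : qpath := (ptgt (psplit1 p k), drop k p.2).
(* (f * g)(p) = sum over factorizations p = p2 p1 of f(p2) g(p1) *)
Definition mulKG (f g : qpath -> K) : qpath -> K :=
  fun p => \sum_(k < (size p.2).+1) f (psplit2 p k) * g (psplit1 p k).

Definition ideal_KG (I : (qpath -> K) -> Prop) : Prop :=
  [/\ forall f, I f -> pathalg_elt f,
      I (fun _ => 0) /\
      forall f g, I f -> I g -> I (fun p => f p + g p),
      forall c f, I f -> I (fun p => c * f p),
      forall f g, pathalg_elt f -> I g -> I (mulKG f g)
    & forall f g, I f -> pathalg_elt g -> I (mulKG f g)].

(* admissible: R^m <= I <= R^2, R the arrow ideal *)
Definition admissible (I : (qpath -> K) -> Prop) : Prop :=
  [/\ ideal_KG I,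
      forall f, I f -> forall p, f p != 0 -> (2 <= plen p)%N
    & exists m, (2 <= m)%N /\ forall p, valid p -> plen p = m -> I (pdelta p)].

(* A finite-dimensional K-space with actions of the vertex idempotents and
   of the arrows. *)
Record rep := Rep {
  rcar : vectType K;
  reps : V -> 'End(rcar);
  rarr : A -> 'End(rcar) }.

Definition ract (M : rep) (p : qpath) (x : rcar M) : rcar M :=
  foldl (fun y a => rarr M a y) (reps M p.1 x) p.2.

(* M is a (finitely generated = finite dimensional, unital) Lambda-module,
   Lambda = K Gamma / I *)
Definition is_mod (I : (qpath -> K) -> Prop) (M : rep) : Prop :=
  [/\ forall v x, reps M v (reps M v x) = reps M v x,
      forall v w x, v != w -> reps M v (reps M w x) = 0,
      forall x, \sum_(v : V) reps M v x = x,
      forall a x, rarr M a x = reps M (tgt a) (rarr M a (reps M (src a) x))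
    & forall f, I f -> forall s : seq qpath, uniq s ->
        (forall p, f p != 0 -> p \in s) ->
        forall x, \sum_(p <- s) f p *: @ract M p x = 0].

Definition is_hom (M N : rep) (f : 'Hom(rcar M, rcar N)) : Prop :=
  (forall v x, f (reps M v x) = reps N v (f x)) /\
  (forall a x, f (rarr M a x) = rarr N a (f x)).

Definition left_approx (C : rep -> Prop) (M X : rep) (f : 'Hom(rcar M, rcar X)) : Prop :=
  [/\ C X, @is_hom M X f &
      forall B, C B -> forall g : 'Hom(rcar M, rcar B), @is_hom M B g ->
        exists h : 'Hom(rcar X, rcar B), @is_hom X B h /\ forall x, g x = h (f x)].
Definition has_left_approx (C : rep -> Prop) (M : rep) : Prop :=
  exists X (f : 'Hom(rcar M, rcar X)), @left_approx C M X f.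

(* J M (J = R/I for admissible I) and Soc M = {x | J x = 0} *)
Definition radM (M : rep) : {vspace rcar M} := (\sum_(a : A) limg (rarr M a))%VS.
Definition socM (M : rep) : {vspace rcar M} := (\bigcap_(a : A) lker (rarr M a))%VS.

Definition generated_by (M : rep) (X : rcar M -> Prop) : Prop :=
  forall U : {vspace rcar M},
    (forall v, (reps M v @: U <= U)%VS) -> (forall a, (rarr M a @: U <= U)%VS) ->
    (forall x, X x -> x \in U) -> U = fullv.

(* the simple module S = Lambda e / J e at vertex e *)
Definition simple_rep (e : V) : rep :=
  @Rep (K^o) (fun v => if v == e then \1%VF else 0%VF) (fun _ => 0%VF).

End Quiver.

Definition sidx (r j : nat) : nat := ((j.-1) %% r).+1.

(* the family p_1..p_r, q_1..q_r indexed by 1..2r *)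
Definition pq_family (T : Type) (r : nat) (p q : nat -> T) (k : nat) : T :=
  if (k <= r)%N then p k else q (k - r)%N.

Arguments ract {V A K} M p x.
Arguments radM {V A K} M.
Arguments socM {V A K} M.
Arguments generated_by {V A K} M X.

From Pilot Require Import Defs.
From HB Require Import structures.
From mathcomp Require Import all_boot all_order all_algebra.
From mathcomp Require Import zify.
From Stdlib Require Import Classical.
Set Implicit Arguments.
Unset Strict Implicit.
Unset Printing Implicit Defensive.
Import GRing.Theory.
Local Open Scope ring_scope.

(* Suppose f : S -> X were a left approximation and take n > dim X.  In M_n the
   socle elements y_k = p_{s(k)} x_k (1 <= k <= nr) are linearly independent, and
   q_{s(k)} x_k = y_{k+1}.  Since none of the p_i, q_i is a subpath of another, a
   path acts nontrivially on x_k only through p_{s(k)} or q_{s(k)} itself; hence,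
   for every w in M_n and every i, p_i w and q_i w are the same linear combination
   of the y_k, up to shifting the index by one.  In particular p_{s(k)} w = y_k
   forces q_{s(k)} w = y_{k+1}.  Now factor the map S -> M_n, 1 |-> y_1, as h o f.
   Condition (2) lets one walk from f 1 along the string inside X, producing a
   preimage under h of every y_k; so nr <= dim X, a contradiction. *)

(* ssrfun also exports a [pcomp] (composition of partial functions). *)
Local Notation pcomp := Defs.pcomp.

Lemma vspace_of_closed_pred (K : fieldType) (vT : vectType K) (P : vT -> Prop) :
  P 0 -> (forall a x y, P x -> P y -> P (a *: x + y)) ->
  exists U : {vspace vT}, forall x, x \in U <-> P x.
Proof.
move=> P0 PD.
suff grow n (U : {vspace vT}) : (\dim {:vT} - \dim U)%N = n -> {in U, forall x, P x} ->
    exists U' : {vspace vT}, forall x, x \in U' <-> P x.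
  by apply: (grow _ 0%VS erefl) => x; rewrite memv0 => /eqP ->.
elim/ltn_ind: n U => n IHn U codimU PU.
have [[w [Pw wU]]|noP] := classic (exists w, P w /\ w \notin U); last first.
  exists U => z; split=> [/PU //|Pz].
  by case: (boolP (z \in U)) => // zU; case: noP; exists z.
have ltUw : (\dim U < \dim (U + <[w]>))%N.
  by rewrite (ltn_leqif (dimv_leqif_sup (addvSl U _))) subv_add subvv -memvE.
apply: (IHn _ _ (U + <[w]>)%VS erefl).
  by have := dimvS (subvf (U + <[w]>)); lia.
move=> z /memv_addP [u uU [v /vlineP [c ->] ->]]; rewrite addrC; exact: PD (PU _ uU).
Qed.

Section LineMap.
Variables (K : fieldType) (vT : vectType K) (y : vT).

Definition line_map (c : K^o) : vT := c *: y.

Fact line_map_is_linear : linear line_map.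
Proof. by move=> a b c; rewrite /line_map scalerDl scalerA. Qed.

HB.instance Definition _ :=
  GRing.isLinear.Build K K^o vT *:%R line_map line_map_is_linear.

End LineMap.

Lemma free_limg_size (K : fieldType) (aT rT : vectType K) (h : 'Hom(aT, rT))
    n (T : n.-tuple rT) :
  free T -> {subset T <= limg h} -> (n <= \dim {:aT})%N.
Proof.
move=> /eqP freeT /span_subvP /dimvS; rewrite freeT size_tuple.
by have := limg_ker_dim h fullv; lia.
Qed.

Section ModuleAction.
Variables (V A : finType) (src tgt : A -> V) (K : fieldType) (M : rep V A K).

Lemma ractP p a y z : ract M p (a *: y + z) = a *: ract M p y + ract M p z.
Proof.
case: p => v s; rewrite /ract linearP /=.
by elim: s (reps M v y) (reps M v z) => //= b s IHs y' z'; rewrite linearP IHs.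
Qed.

Lemma ract0 p : ract M p 0 = 0.
Proof.
by case: p => v s; rewrite /ract linear0 /=; elim: s => //= b s; rewrite linear0.
Qed.

Hypothesis reps_idem : forall v y, reps M v (reps M v y) = reps M v y.
Hypothesis reps_orth : forall v w y, v != w -> reps M v (reps M w y) = 0.
Hypothesis rarr_reps :
  forall a y, rarr M a y = reps M (tgt a) (rarr M a (reps M (src a) y)).

Lemma reps_ract_tgt p y : reps M (ptgt tgt p) (ract M p y) = ract M p y.
Proof.
case: p => v s; rewrite /ract /ptgt /=.
elim: s v (reps M v y) (reps_idem v y) => //= a s IHs v z _.
by apply: IHs; rewrite [in RHS]rarr_reps [in LHS]rarr_reps reps_idem.
Qed.

Lemma reps_ract_other w p y : w != ptgt tgt p -> reps M w (ract M p y) = 0.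
Proof. by move=> wp; rewrite -reps_ract_tgt reps_orth. Qed.

Lemma ract_comp pi sg y :
  ptgt tgt sg = psrc pi -> ract M pi (ract M sg y) = ract M (pcomp pi sg) y.
Proof.
move=> sg_pi; rewrite {1}/ract -[pi.1]/(psrc pi) -sg_pi reps_ract_tgt.
by rewrite /ract /pcomp /= foldl_cat.
Qed.

Lemma ract_nocomp pi sg y :
  ptgt tgt sg != psrc pi -> ract M pi (ract M sg y) = 0.
Proof.
move=> sg_pi; have -> : ract M pi (ract M sg y) =
    ract M pi (reps M (psrc pi) (ract M sg y)) by rewrite /ract reps_idem.
by rewrite reps_ract_other 1?eq_sym // ract0.
Qed.

Lemma rarr_ract a y : rarr M a y = ract M (src a, [:: a]) y.
Proof. by rewrite /ract /= [LHS]rarr_reps [RHS]rarr_reps reps_idem. Qed.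

End ModuleAction.

Lemma hom_ract (V A : finType) (K : fieldType) (M N : rep V A K)
    (h : 'Hom(rcar M, rcar N)) p y :
  is_hom h -> h (ract M p y) = ract N p (h y).
Proof.
case: p => v s [h_reps h_rarr]; rewrite /ract -h_reps /=.
by elim: s (reps M v y) => //= a s IHs z; rewrite -h_rarr IHs.
Qed.

Lemma socMP (V A : finType) (K : fieldType) (M : rep V A K) y :
  reflect (forall a, rarr M a y = 0) (y \in socM M).
Proof.
apply: (iffP idP) => [ysoc a | y0].
  by apply/eqP; rewrite -memv_ker (subvP (bigcapv_inf a _ _) _ ysoc).
by rewrite memvE; apply/subv_bigcapP => a _; rewrite -memvE memv_ker y0.
Qed.

Lemma simple_rep_line_hom (V A : finType) (K : fieldType) (M : rep V A K)
    (e : V) (y : rcar M) :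
  y \in socM M -> (forall v, reps M v y = if v == e then y else 0) ->
  @is_hom V A K (simple_rep A K e) M (linfun (line_map y)).
Proof.
move=> /socMP ysoc yreps; split=> [v c | a c]; rewrite !lfunE /= /line_map linearZ /=.
  by rewrite yreps; case: (v == e); rewrite ?id_lfunE ?zero_lfunE ?scale0r ?scaler0.
by rewrite ysoc scale0r scaler0.
Qed.

Section Paths.
Variables (V A : finType) (src tgt : A -> V).

Lemma valid_pcomp pi sg : valid src tgt sg -> valid src tgt pi ->
  ptgt tgt sg = psrc pi -> valid src tgt (pcomp pi sg).
Proof.
case: sg pi => v s [w t]; rewrite /valid /ptgt /psrc /= => vs vt st; subst w.
by elim: s v vs vt => //= a s IHs v /andP [-> /IHs].
Qed.

Lemma pcomp_nil pi P : plen pi = 0%N -> ptgt tgt pi = psrc P -> pcomp P pi = P.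
Proof. by case: pi P => v [|//] [w t] _; rewrite /ptgt /psrc /= => ->. Qed.

Lemma right_subpath_pcomp pi P Y : valid src tgt pi -> valid src tgt P ->
  ptgt tgt pi = psrc P -> (0 < plen P)%N -> right_subpath src tgt (pcomp P pi) Y ->
  subpath src tgt P Y /\ (plen P + plen pi <= plen Y)%N.
Proof.
move=> vpi vP pi_P lenP [Q [vQ PQ ->]]; split.
  exists pi, Q; split=> //; rewrite -PQ /ptgt /pcomp /= map_cat last_cat.
  by case: P lenP {vP pi_P PQ} => v [].
by rewrite /plen /pcomp /= !size_cat; lia.
Qed.

End Paths.

Lemma sidx_range r k : (0 < r)%N -> (1 <= sidx r k <= r)%N.
Proof. by move=> r_gt0; rewrite /sidx ltnS ltn_pmod. Qed.

Lemma sidx1 r : sidx r 1 = 1%N.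
Proof. by rewrite /sidx mod0n. Qed.

Lemma sidxS r j : (0 < j)%N -> sidx r (sidx r j).+1 = sidx r j.+1.
Proof. by case: j => // j _; rewrite /sidx /= -[(j %% r).+1]addn1 modnDml addn1. Qed.

Lemma pq_family_p T r (p q : nat -> T) i : (i <= r)%N -> pq_family r p q i = p i.
Proof. by rewrite /pq_family => ->. Qed.

Lemma pq_family_q T r (p q : nat -> T) i : (0 < i)%N -> pq_family r p q (i + r) = q i.
Proof. by rewrite /pq_family addnK; case: ifP => //; lia. Qed.

Lemma big_nat_delta (K : fieldType) (vT : lmodType K) (G : nat -> vT) m n k :
  \sum_(m <= l < n) (l == k)%:R *: G l = if (m <= k < n)%N then G k else 0.
Proof.
rewrite (eq_bigr (fun l => if l == k then G k else 0)); last first.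
  by move=> l _; case: eqP => [->|_]; rewrite ?scale1r ?scale0r.
case: ifP => kmn.
  rewrite (bigD1_seq k) ?mem_index_iota ?iota_uniq //= eqxx big1 ?addr0 //.
  by move=> l /negbTE ->.
rewrite big1_seq // => l /andP [_]; rewrite mem_index_iota => lmn.
by case: eqP => // lk; rewrite -lk lmn in kmn.
Qed.

Section StringModule.
Variables (V A : finType) (src tgt : A -> V) (K : fieldType) (M : rep V A K).
Hypothesis reps_idem : forall v y, reps M v (reps M v y) = reps M v y.
Hypothesis reps_orth : forall v w y, v != w -> reps M v (reps M w y) = 0.
Hypothesis rarr_reps :
  forall a y, rarr M a y = reps M (tgt a) (rarr M a (reps M (src a) y)).

Variables (r N : nat) (e : nat -> V) (p q : nat -> qpath V A) (x : nat -> rcar M).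
Hypothesis r_gt0 : (1 <= r)%N.
Hypothesis pq_shape : forall i, (1 <= i <= r)%N ->
  [/\ valid src tgt (p i) /\ valid src tgt (q i),
      (0 < plen (p i))%N /\ (0 < plen (q i))%N,
      psrc (p i) = psrc (q i), ptgt tgt (p i) = e i
    & ptgt tgt (q i) = e (sidx r i.+1)].
Hypothesis pq_nosub : forall k l, (1 <= k <= 2 * r)%N -> (1 <= l <= 2 * r)%N ->
  k <> l -> ~ subpath src tgt (pq_family r p q k) (pq_family r p q l).
Hypothesis x_gen : generated_by M (fun y => exists j, (1 <= j <= N)%N /\ y = x j).
Hypothesis x_glue : forall j, (1 <= j < N)%N ->
  ract M (q (sidx r j)) (x j) = ract M (p (sidx r j.+1)) (x j.+1).
Hypothesis x_socle :
  let y := fun j : nat => if j == 0%N then ract M (p (sidx r 1)) (x 1%N)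
                          else ract M (q (sidx r j)) (x j) in
  (forall j, (j < N)%N -> y j \in socM M) /\
  (forall c : nat -> K, \sum_(0 <= j < N) c j *: y j = 0 ->
     forall j, (j < N)%N -> c j = 0).
Hypothesis x_annih : forall j, (1 <= j <= N)%N -> forall pth, valid src tgt pth ->
  ract M pth (x j) != 0 ->
  right_subpath src tgt pth (p (sidx r j)) \/
  ((j < N)%N /\ right_subpath src tgt pth (q (sidx r j))).

Definition string_socle (k : nat) : rcar M := ract M (p (sidx r k)) (x k).
Local Notation Y := string_socle.

Lemma string_socle_soc : (0 < N)%N -> Y 1 \in socM M.
Proof. by move=> N_gt0; have [/(_ 0%N N_gt0)] := x_socle. Qed.

Lemma string_socle_free : forall c : nat -> K,
  \sum_(1 <= k < N.+1) c k *: Y k = 0 -> forall k, (1 <= k <= N)%N -> c k = 0.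
Proof.
move=> c c0 [//|k] /andP [_ kN]; apply: (proj2 x_socle (fun j => c j.+1)) kN.
rewrite -[RHS]c0 big_add1 /=; apply: eq_big_nat => j /andP [_ jN].
by case: j jN => [|j] jN //=; rewrite x_glue.
Qed.

Lemma free_string_socle : free [tuple Y i.+1 | i < N].
Proof.
apply/freeP => c c0 i; pose c' k := c (insubd i k.-1).
have -> : c i = c' i.+1 by rewrite /c' /= valKd.
apply: string_socle_free; last by have := ltn_ord i; lia.
rewrite big_add1 /= -[RHS]c0 big_mkord; apply: eq_bigr => j _.
by rewrite nth_mktuple /c' /= valKd.
Qed.

Lemma subpath_pp i k : (1 <= i <= r)%N -> (1 <= k <= r)%N ->
  subpath src tgt (p i) (p k) -> i = k.
Proof.
move=> ir kr sub; apply/eqP/negPn/negP => /eqP ik.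
by apply: (pq_nosub (k := i) (l := k)); rewrite ?pq_family_p //; lia.
Qed.

Lemma subpath_qq i k : (1 <= i <= r)%N -> (1 <= k <= r)%N ->
  subpath src tgt (q i) (q k) -> i = k.
Proof.
move=> ir kr sub; apply/eqP/negPn/negP => /eqP ik.
by apply: (pq_nosub (k := i + r) (l := k + r)); rewrite ?pq_family_q //; lia.
Qed.

Lemma not_subpath_pq i k : (1 <= i <= r)%N -> (1 <= k <= r)%N ->
  ~ subpath src tgt (p i) (q k).
Proof.
move=> ir kr; have := @pq_nosub i (k + r).
by rewrite pq_family_p ?pq_family_q; try lia; apply; lia.
Qed.

Lemma not_subpath_qp i k : (1 <= i <= r)%N -> (1 <= k <= r)%N ->
  ~ subpath src tgt (q i) (p k).
Proof.
move=> ir kr; have := @pq_nosub (i + r) k.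
by rewrite pq_family_q ?pq_family_p; try lia; apply; lia.
Qed.

Lemma ract_p_string i k pi : (1 <= i <= r)%N -> (1 <= k <= N)%N ->
  valid src tgt pi -> ptgt tgt pi = psrc (p i) ->
  ract M (pcomp (p i) pi) (x k) =
    if (i == sidx r k) && (plen pi == 0%N) then Y k else 0.
Proof.
move=> ir kN vpi pi_p; have [[vp _] [lp _] _ _ _] := pq_shape ir.
have sr := sidx_range k r_gt0.
case: ifP => [/andP [/eqP ik /eqP pi0] | not_kpi].
  by rewrite (pcomp_nil (tgt := tgt)) // ik.
apply/eqP; apply: contraFT not_kpi => nz.
have [|[_]] := x_annih kN (valid_pcomp vpi vp pi_p) nz;
  move=> /(right_subpath_pcomp vpi vp pi_p lp) [sub len]; last first.
  by case: (not_subpath_pq ir sr sub).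
have ik := subpath_pp ir sr sub; rewrite -ik in len.
by rewrite ik eqxx /=; apply/eqP; lia.
Qed.

Lemma ract_q_string i k pi : (1 <= i <= r)%N -> (1 <= k <= N)%N ->
  valid src tgt pi -> ptgt tgt pi = psrc (q i) ->
  ract M (pcomp (q i) pi) (x k) =
    if [&& i == sidx r k, plen pi == 0%N & (k < N)%N] then Y k.+1 else 0.
Proof.
move=> ir kN vpi pi_q; have [[_ vq] [_ lq] _ _ _] := pq_shape ir.
have sr := sidx_range k r_gt0.
case: ifP => [/and3P [/eqP ik /eqP pi0 k_lt_N] | not_kpi].
  by rewrite (pcomp_nil (tgt := tgt)) // ik x_glue //; lia.
apply/eqP; apply: contraFT not_kpi => nz.
have [|[k_lt_N]] := x_annih kN (valid_pcomp vpi vq pi_q) nz;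
  move=> /(right_subpath_pcomp vpi vq pi_q lq) [sub len].
  by case: (not_subpath_qp ir sr sub).
have ik := subpath_qq ir sr sub; rewrite -ik in len.
by rewrite ik eqxx k_lt_N /=; apply/eqP; lia.
Qed.

Definition shifted_pair (a b : rcar M) : Prop :=
  exists lam : nat -> K,
    a = \sum_(1 <= k < N.+1) lam k *: Y k /\ b = \sum_(1 <= k < N) lam k *: Y k.+1.

Lemma shifted_pair0 : shifted_pair 0 0.
Proof. by exists (fun=> 0); split; rewrite big1 // => k _; rewrite scale0r. Qed.

Lemma shifted_pairP c a b a' b' : shifted_pair a b -> shifted_pair a' b' ->
  shifted_pair (c *: a + a') (c *: b + b').
Proof.
move=> [lam [-> ->]] [lam' [-> ->]]; exists (fun k => c * lam k + lam' k).
by rewrite !scaler_sumr -!big_split; split; apply: eq_bigr => k _;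
  rewrite scalerDl scalerA.
Qed.

Lemma shifted_pair_string k : (1 <= k <= N)%N ->
  shifted_pair (Y k) (if (k < N)%N then Y k.+1 else 0).
Proof.
move=> /andP [k_gt0 kN]; exists (fun l => (l == k)%:R).
by rewrite !big_nat_delta k_gt0 /= ltnS kN.
Qed.

Lemma shifted_pair_string_eq j b : (1 <= j < N)%N ->
  shifted_pair (Y j) b -> b = Y j.+1.
Proof.
move=> jN [lam [lamY ->]].
have lam_delta k : (1 <= k <= N)%N -> lam k = (k == j)%:R.
  move=> kN; apply/eqP; rewrite -subr_eq0; apply/eqP; move: k kN.
  apply: string_socle_free; under eq_bigr do rewrite scalerBl.
  by rewrite sumrB -lamY big_nat_delta ifT ?subrr //; lia.
rewrite (eq_big_nat _ _ (F2 := fun k => (k == j)%:R *: Y k.+1)).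
  by rewrite big_nat_delta ifT.
by move=> k kN; rewrite lam_delta //; lia.
Qed.

Lemma shifted_pair_generator i k pi : (1 <= i <= r)%N -> (1 <= k <= N)%N ->
  valid src tgt pi ->
  shifted_pair (ract M (p i) (ract M pi (x k))) (ract M (q i) (ract M pi (x k))).
Proof.
move=> ir kN vpi; have [_ _ pq_src _ _] := pq_shape ir.
have [pi_p|pi_p] := eqVneq (ptgt tgt pi) (psrc (p i)); last first.
  by rewrite !(ract_nocomp reps_idem reps_orth rarr_reps) -?pq_src //;
    exact: shifted_pair0.
have pi_q : ptgt tgt pi = psrc (q i) by rewrite -pq_src.
rewrite !(ract_comp reps_idem rarr_reps) // ract_p_string // ract_q_string //.
case: (i == sidx r k); case: (plen pi == 0%N) => /=; try exact: shifted_pair0.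
exact: shifted_pair_string.
Qed.

Lemma shifted_pair_ract i w : (1 <= i <= r)%N ->
  shifted_pair (ract M (p i) w) (ract M (q i) w).
Proof.
(* The w all of whose translates have shifted coordinates form a submodule
   containing the generators. *)
move=> ir; pose P w := forall pi, valid src tgt pi -> forall i, (1 <= i <= r)%N ->
  shifted_pair (ract M (p i) (ract M pi w)) (ract M (q i) (ract M pi w)).
have P0 : P 0 by move=> pi _ i' _; rewrite !ract0; exact: shifted_pair0.
have PD c w1 w2 : P w1 -> P w2 -> P (c *: w1 + w2).
  move=> P1 P2 pi vpi i' i'r; rewrite !ractP.
  by apply: shifted_pairP; [exact: P1 | exact: P2].
have P_ract sg w' : valid src tgt sg -> P w' -> P (ract M sg w').
  move=> vsg Pw pi vpi i' i'r.
  have [sg_pi|sg_pi] := eqVneq (ptgt tgt sg) (psrc pi).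
    rewrite ![ract M pi _](ract_comp reps_idem rarr_reps) //.
    exact: Pw _ (valid_pcomp vsg vpi sg_pi) _ i'r.
  rewrite ![ract M pi _](ract_nocomp reps_idem reps_orth rarr_reps) // !ract0.
  exact: shifted_pair0.
have [U memU] := vspace_of_closed_pred P0 PD.
have U_full : U = fullv.
  apply: x_gen => [v | a | _ [k [kN ->]]].
  - apply/subvP => _ /memv_imgP [z /memU Pz ->]; apply/memU; exact: (P_ract (v, [::])).
  - apply/subvP => _ /memv_imgP [z /memU Pz ->]; apply/memU.
    rewrite (rarr_ract reps_idem rarr_reps); apply: P_ract Pz.
    by rewrite /valid /= eqxx.
  - by apply/memU => pi vpi i' i'r; exact: shifted_pair_generator.
have /memU Pw : w \in U by rewrite U_full memvf.
have [_ _ pq_src _ _] := pq_shape ir.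
have := Pw (psrc (p i), [::]) isT i ir.
rewrite !(ract_comp reps_idem rarr_reps) -?pq_src //.
by rewrite !(pcomp_nil (tgt := tgt)) -?pq_src.
Qed.

Lemma string_step j w : (1 <= j < N)%N ->
  ract M (p (sidx r j)) w = Y j -> ract M (q (sidx r j)) w = Y j.+1.
Proof.
move=> jN pw; apply: shifted_pair_string_eq jN _.
by rewrite -pw; apply: shifted_pair_ract; exact: sidx_range.
Qed.

Definition socle_string_closed (B : rep V A K) : Prop :=
  [/\ forall y, y \in socM B -> exists z, reps B (e 1%N) y = ract B (p 1%N) z,
      forall i, (1 <= i <= r)%N -> forall z, ract B (q i) z \in socM B ->
        exists w, ract B (q i) z = ract B (p (sidx r i.+1)) w
    & forall i, (1 <= i <= r)%N -> forall z,
        ract B (p i) z \in socM B -> ract B (q i) z \in socM B].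

Lemma string_in_limg (X : rep V A K) (h : 'Hom(rcar X, rcar M)) z1 :
  is_hom h -> socle_string_closed X ->
  ract X (p 1%N) z1 \in socM X -> h (ract X (p 1%N) z1) = Y 1 ->
  forall k, (1 <= k <= N)%N -> Y k \in limg h.
Proof.
move=> hom_h [_ q_to_p p_soc_q] z1soc hz1.
suff chain k : (1 <= k <= N)%N -> exists z,
    ract X (p (sidx r k)) z \in socM X /\ h (ract X (p (sidx r k)) z) = Y k.
  by move=> k /chain [z [_ <-]]; rewrite memv_img ?memvf.
elim: k => [//|k IHk] kN.
have [->|k_gt0] := posnP k; first by exists z1; rewrite sidx1.
have /IHk [z [zsoc hz]] : (1 <= k <= N)%N by lia.
have sr := sidx_range k r_gt0.
have [w] := q_to_p _ sr z (p_soc_q _ sr z zsoc); rewrite sidxS // => qw.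
exists w; rewrite -qw; split; first exact: p_soc_q.
rewrite hom_ract //; apply: string_step; first lia.
by rewrite -hom_ract.
Qed.

Lemma approx_dim_ge (C : rep V A K -> Prop) X
    (f : 'Hom(rcar (simple_rep A K (e 1%N)), rcar X)) :
  C M -> (forall B, C B -> socle_string_closed B) -> (0 < N)%N ->
  left_approx C f -> (N <= \dim {:rcar X})%N.
Proof.
move=> CM C_closed N_gt0 [CX [f_reps f_rarr] univ].
have /pq_shape [_ _ _ tgt_p1 _] : (1 <= 1 <= r)%N by rewrite leqnn r_gt0.
have Y1reps v : reps M v (Y 1) = if v == e 1%N then Y 1 else 0.
  rewrite /string_socle sidx1; case: eqP => [->|/eqP v_e1].
    by rewrite -tgt_p1 (reps_ract_tgt reps_idem rarr_reps).
  by rewrite (reps_ract_other reps_idem reps_orth rarr_reps) ?tgt_p1.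
have [h [hom_h gE]] :=
  univ M CM _ (simple_rep_line_hom (string_socle_soc N_gt0) Y1reps).
pose u := f (1 : K^o).
have usoc : u \in socM X.
  by apply/socMP => a; rewrite /u -f_rarr /= zero_lfunE linear0.
have ue1 : reps X (e 1%N) u = u by rewrite /u -f_reps /= eqxx id_lfunE.
have [soc_p1 _ _] := C_closed X CX.
have [z1 z1u] := soc_p1 u usoc; rewrite ue1 in z1u.
apply: (free_limg_size (h := h) free_string_socle) => _ /tnthP [i ->].
rewrite tnth_mktuple; apply: (string_in_limg (z1 := z1) hom_h (C_closed X CX)).
- by rewrite -z1u.
- by rewrite -z1u /u -gE lfunE /= /line_map scale1r.
- by have := ltn_ord i; lia.
Qed.
End StringModule.

Theorem mainTheorem1
  (K : fieldType) (V A : finType) (src tgt : A -> V)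
  (I : (qpath V A -> K) -> Prop) (C : rep V A K -> Prop)
  (r : nat) (e : nat -> V) (p q : nat -> qpath V A) :
  admissible src tgt I ->
  (forall M, C M -> is_mod src tgt I M) ->
  (1 <= r)%N ->
  (forall i, (1 <= i <= r)%N ->
     [/\ valid src tgt (p i) /\ valid src tgt (q i), (0 < plen (p i))%N /\ (0 < plen (q i))%N,
         psrc (p i) = psrc (q i), ptgt tgt (p i) = e i
       & ptgt tgt (q i) = e (sidx r i.+1)]) ->
  (forall k l, (1 <= k <= 2 * r)%N -> (1 <= l <= 2 * r)%N -> k <> l ->
     ~ subpath src tgt (pq_family r p q k) (pq_family r p q l)) ->
  (forall n, (1 <= n)%N ->
     exists M, C M /\ exists x : nat -> rcar M,
       [/\ generated_by M (fun y => exists j, (1 <= j <= n * r)%N /\ y = x j),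
           (forall j, (1 <= j <= n * r)%N ->
              x j \notin radM M /\ reps M (psrc (p (sidx r j))) (x j) = x j),
           (forall c : nat -> K,
              \sum_(1 <= j < (n * r).+1) c j *: x j \in radM M ->
              forall j, (1 <= j <= n * r)%N -> c j = 0),
           (forall j, (1 <= j < n * r)%N ->
              ract M (q (sidx r j)) (x j) = ract M (p (sidx r j.+1)) (x j.+1))
         & (let y := fun j : nat => if j == 0%N then ract M (p (sidx r 1)) (x 1%N)
                                      else ract M (q (sidx r j)) (x j) in
                (forall j, (j < n * r)%N -> y j \in socM M) /\
                (forall c : nat -> K, \sum_(0 <= j < n * r) c j *: y j = 0 ->
                   forall j, (j < n * r)%N -> c j = 0)) /\
               (forall j, (1 <= j <= n * r)%N -> forall pth, valid src tgt pth ->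
                  ract M pth (x j) != 0 ->
                  right_subpath src tgt pth (p (sidx r j)) \/
                  ((j < n * r)%N /\ right_subpath src tgt pth (q (sidx r j))))]) ->
  (forall B, C B ->
     [/\ (forall y, y \in socM B -> exists z, reps B (e 1%N) y = ract B (p 1%N) z),
         (forall i, (1 <= i <= r)%N -> forall z, ract B (q i) z \in socM B ->
            exists w, ract B (q i) z = ract B (p (sidx r i.+1)) w)
       & (forall i, (1 <= i <= r)%N -> forall z,
            ract B (p i) z \in socM B -> ract B (q i) z \in socM B)]) ->
  ~ has_left_approx C (simple_rep A K (e 1%N)).
Proof.
move=> _ C_mod r_gt0 pq_shape pq_nosub cond1 C_closed [X [f approx]].
have [M [CM [x [x_gen _ _ x_glue [x_socle x_annih]]]]] :=
  cond1 (\dim {:rcar X}).+1 isT.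
have [reps_idem reps_orth _ rarr_reps _] := C_mod M CM.
have N_gt0 : (0 < (\dim {:rcar X}).+1 * r)%N by rewrite muln_gt0.
have := approx_dim_ge reps_idem reps_orth rarr_reps r_gt0 pq_shape pq_nosub
  x_gen x_glue x_socle x_annih CM C_closed N_gt0 approx.
by have := leq_pmulr (\dim {:rcar X}).+1 r_gt0; lia.
Qed.
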